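(* Let $r>1$ and let $k,\ell,m$ be positive integers with $m\ge 12r$. Let $x_0\in R_1\cup\dots\cup R_\ell$ be an arbitrary reservoir vertex of the $(k,\ell,m)$-megastar and run the Moran process with fitness $r$ on the megastar with initial mutant $x_0$. Then the process goes extinct with probability at least $1/(26r^2\ell)$.
   Context: Moran process: given a directed graph $G$ and fitness $r$, one vertex $x_0$ is a mutant, the rest non-mutants. At each step a vertex $v$ is chosen with probability proportional to fitness (mutants $r$, non-mutants $1$), an out-neighbour $w$ of $v$ is chosen uniformly at random and the state of $v$ is copied to $w$. Extinction: eventually no vertex is a mutant. The $(k,\ell,m)$-megastar: disjoint union of reservoirs $R_1,\dots,R_\ell$ (size $m$), cliques $K_1,\dots,K_\ell$ (size $k$), feeders $a_1,\dots,a_\ell$, and centre $v^*$; edges from $v^*$ to all reservoir vertices, from each vertex of $R_i$ to $a_i$, from $a_i$ to each vertex of $K_i$, both directions between distinct vertices of each $K_i$, and from every clique vertex to $v^*$. *)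

From mathcomp Require Import all_boot all_order all_algebra.
From mathcomp Require Import classical_sets reals.
Set Implicit Arguments. Unset Strict Implicit. Unset Printing Implicit Defensive.
Import Order.TTheory GRing.Theory Num.Theory.
Local Open Scope ring_scope.

Section Moran.
Variables (R : realType) (T : finType) (E : rel T) (r : R).

Definition outnb (v : T) : {set T} := [set w | E v w].

(* fitness of v in state S (S = set of mutants) *)
Definition fit (S : {set T}) (v : T) : R := if v \in S then r else 1.

Definition total_fit (S : {set T}) : R := \sum_v fit S v.

Definition moran_update (S : {set T}) (v w : T) : {set T} :=
  if v \in S then w |: S else S :\ w.

(* one-step transition probability from S to S'.  (If v had no
   out-neighbour the state would stay put; this never happens in the
   megastar.) *)
Definition moran_trans (S S' : {set T}) : R :=
  \sum_v (fit S v / total_fit S) *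
    (if outnb v == finset.set0 then (S' == S)%:R
     else \sum_(w in outnb v) (#|outnb v|%:R)^-1 * (moran_update S v w == S')%:R).

Definition moran_step (d : {set T} -> R) : {set T} -> R :=
  fun S' => \sum_S d S * moran_trans S S'.

Definition moran_dist (x0 : T) (n : nat) : {set T} -> R :=
  iter n moran_step (fun S => (S == [set x0])%:R).

(* Since the empty state is absorbing, the events {X_n = set0} increase and
   their union has probability sup_n P(X_n = set0). *)
Definition extinction_prob (x0 : T) : R :=
  sup (range (fun n => moran_dist x0 n finset.set0)).

End Moran.

(* vertex type: ((centre + reservoirs) + cliques) + feeders *)
Definition megastar_V (k l m : nat) : finType :=
  (((unit + ('I_l * 'I_m)) + ('I_l * 'I_k)) + 'I_l)%type.

Definition mega_centre {k l m} : megastar_V k l m := inl (inl (inl tt)).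
Definition mega_res {k l m} (i : 'I_l) (j : 'I_m) : megastar_V k l m :=
  inl (inl (inr (i, j))).
Definition mega_clq {k l m} (i : 'I_l) (j : 'I_k) : megastar_V k l m :=
  inl (inr (i, j)).
Definition mega_feeder {k l m} (i : 'I_l) : megastar_V k l m := inr i.

Definition megastar_edge (k l m : nat) : rel (megastar_V k l m) :=
  fun u v =>
    match u, v with
    (* v* -> every reservoir vertex *)
    | inl (inl (inl _)), inl (inl (inr _)) => true
    (* R_i -> a_i *)
    | inl (inl (inr (i, _))), inr i' => i == i'
    (* a_i -> every vertex of K_i *)
    | inr i, inl (inr (i', _)) => i == i'
    (* K_i: both directions between distinct vertices *)
    | inl (inr (i, j)), inl (inr (i', j')) => (i == i') && (j != j')
    (* every clique vertex -> v* *)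
    | inl (inr _), inl (inl (inl _)) => true
    | _, _ => false
    end.

(* Watch the potential f that equals 1 on the extinct state, gA := 1/(13 r^2 l) on the
   state {x0} and a slightly smaller gB on {x0, a}, where a is the feeder of the reservoir
   of x0, and 0 elsewhere.  From {x0} the centre kills x0 (probability about 1/(l m) per
   centre move), which outweighs the loss when x0 invades a; from {x0, a} the m - 1 other
   vertices of the reservoir reset a, which outweighs a invading its clique.  Hence
   E f(X_(t+1)) >= E f(X_t) + de P(X_t in {{x0}, {x0, a}}) for some de > 0.  As long as
   P(X_t = empty) < gA/2, the bound E f <= P(X_t = empty) + P(X_t in {{x0}, {x0, a}})
   keeps the second probability above gA/2, so E f would grow without bound; since
   E f <= 1, the extinction probability reaches gA/2 = 1/(26 r^2 l). *)

From mathcomp Require Import all_boot all_order all_algebra.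
From mathcomp Require Import classical_sets reals.
From mathcomp Require Import ring lra.
Import Order.TTheory GRing.Theory Num.Theory.
Local Open Scope ring_scope.
Set Implicit Arguments. Unset Strict Implicit. Unset Printing Implicit Defensive.

Lemma sum_mul_indicator (R : pzSemiRingType) (X : finType) (P : pred X) (d : X -> R) :
  \sum_x d x * (P x)%:R = \sum_(x | P x) d x.
Proof.
by rewrite [RHS]big_mkcond; apply: eq_bigr => x _; case: (P x); rewrite ?mulr1 ?mulr0.
Qed.

Section MarkovChain.
Variables (R : archiRealFieldType) (X : finType) (K : X -> X -> R).

Definition chain_step (d : X -> R) : X -> R := fun y => \sum_x d x * K x y.

Definition expect (d f : X -> R) : R := \sum_x d x * f x.

Lemma expect_chain_step d f :
  expect (chain_step d) f = expect d (fun x => \sum_y K x y * f y).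
Proof.
rewrite /expect /chain_step (eq_bigr (fun y => \sum_x d x * K x y * f y));
  last by move=> y _; rewrite mulr_suml.
rewrite exchange_big; apply: eq_bigr => x _; rewrite mulr_sumr.
by apply: eq_bigr => y _; rewrite mulrA.
Qed.

Hypothesis K_ge0 : forall x y, 0 <= K x y.
Hypothesis K_sum1 : forall x, \sum_y K x y = 1.

Variable d0 : X -> R.
Hypothesis d0_ge0 : forall x, 0 <= d0 x.
Hypothesis d0_sum1 : \sum_x d0 x = 1.

Local Notation law n := (iter n chain_step d0).

Lemma law_ge0 n x : 0 <= law n x.
Proof.
elim: n x => [|n IH] y //=; apply: sumr_ge0 => x _; exact: mulr_ge0.
Qed.

Lemma law_sum1 n : \sum_x law n x = 1.
Proof.
elim: n => [|n IH] //; have := expect_chain_step (law n) (fun=> 1).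
rewrite /expect /=; under eq_bigr do rewrite mulr1.
move=> ->; rewrite -[RHS]IH; apply: eq_bigr => x _.
by under eq_bigr do rewrite mulr1; rewrite K_sum1 mulr1.
Qed.

Variables (f : X -> R) (z : X) (D : {set X}) (de g : R).
Hypothesis f_le1 : forall x, f x <= 1.
Hypothesis f_le_indicator : forall x, f x <= (x == z)%:R + (x \in D)%:R.
Hypothesis f_drift : forall x, f x + de * (x \in D)%:R <= \sum_y K x y * f y.

Lemma expect_law_drift n :
  expect (law n) f + de * \sum_(x in D) law n x <= expect (law n.+1) f.
Proof.
rewrite /= expect_chain_step /expect -[\sum_(x in D) _]sum_mul_indicator.
rewrite mulr_sumr -big_split /=.
apply: ler_sum => x _; rewrite mulrCA -mulrDr; apply: ler_wpM2l; first exact: law_ge0.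
exact: f_drift.
Qed.

Lemma expect_law_le_mass n : expect (law n) f <= law n z + \sum_(x in D) law n x.
Proof.
apply: (@le_trans _ _ (\sum_x law n x * ((x == z)%:R + (x \in D)%:R))).
  by apply: ler_sum => x _; apply: ler_wpM2l; [exact: law_ge0 | exact: f_le_indicator].
under eq_bigr do rewrite mulrDr; rewrite big_split /=.
by rewrite !sum_mul_indicator big_pred1_eq.
Qed.

Lemma expect_law_le1 n : expect (law n) f <= 1.
Proof.
rewrite -(law_sum1 n); apply: ler_sum => x _.
by rewrite -[X in _ <= X]mulr1; apply: ler_wpM2l; [exact: law_ge0 | exact: f_le1].
Qed.

Hypotheses (de_gt0 : 0 < de) (g_gt0 : 0 < g) (g_le_expect : g <= expect d0 f).

Lemma expect_law_grows n : (forall t, (t < n)%N -> law t z < g / 2) ->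
  g + n%:R * (de * (g / 2)) <= expect (law n) f.
Proof.
elim: n => [|n IH] small_z; first by rewrite mul0r addr0.
have IHn := IH (fun t lt_tn => small_z t (ltnW lt_tn)).
have z_n := small_z n (ltnSn n).
have := expect_law_drift n; have := expect_law_le_mass n.
set mass := \sum_(x in D) _ => le_mass le_drift.
have dg_gt0 : 0 < de * (g / 2) by rewrite mulr_gt0 ?divr_gt0.
have step_ge0 : 0 <= n%:R * (de * (g / 2)) by rewrite mulr_ge0 ?ler0n ?ltW.
have le_gain : de * (g / 2) <= de * mass by rewrite ler_wpM2l ?(ltW de_gt0) //; lra.
have -> : n.+1%:R = n%:R + 1 :> R by rewrite natr1.
rewrite mulrDl mul1r; lra.
Qed.

Lemma chain_hits : exists n, g / 2 <= law n z.
Proof.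
have dg_gt0 : 0 < de * (g / 2) by rewrite mulr_gt0 ?divr_gt0.
have [N lt_N] : exists N : nat, (de * (g / 2))^-1 < N%:R.
  by exists (Num.Def.archi_bound (de * (g / 2))^-1); rewrite archi_boundP ?invr_ge0 ?ltW.
have [/existsP [t le_t] | /existsPn no_hit] := boolP [exists t : 'I_N, g / 2 <= law t z].
  by exists t.
have small_z t (lt_tN : (t < N)%N) : law t z < g / 2.
  by rewrite ltNge; exact: no_hit (Ordinal lt_tN).
have := expect_law_grows small_z; have := expect_law_le1 N.
have : 1 < N%:R * (de * (g / 2)) by rewrite -ltr_pdivrMr // div1r.
move: g_gt0; lra.
Qed.
End MarkovChain.

Section MoranKernel.
Variables (R : realType) (T : finType) (E : rel T) (r : R).
Hypotheses (r_gt0 : 0 < r) (T_nonempty : (0 < #|T|)%N).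

Local Notation W := (total_fit r).

Lemma fit_gt0 (S : {set T}) (v : T) : 0 < fit r S v.
Proof. by rewrite /fit; case: ifP. Qed.

Lemma total_fit_gt0 (S : {set T}) : 0 < W S.
Proof.
have [v _] := card_gt0P T_nonempty.
rewrite /total_fit (bigD1 v) //= ltr_wpDr ?fit_gt0 //.
by apply: sumr_ge0 => w _; exact/ltW/fit_gt0.
Qed.

Lemma sum_fit_div (S : {set T}) : \sum_v fit r S v / W S = 1.
Proof. by rewrite -mulr_suml mulfV // gt_eqF ?total_fit_gt0. Qed.

(* Expected change of [f] when [v] reproduces; it vanishes when [v] has no out-neighbour,
   in accordance with [moran_trans]. *)
Definition moran_drift (f : {set T} -> R) (S : {set T}) (v : T) : R :=
  (#|outnb E v|%:R)^-1 * \sum_(w in outnb E v) (f (moran_update S v w) - f S).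

Lemma moran_trans_expect (f : {set T} -> R) (S : {set T}) :
  \sum_S' moran_trans E r S S' * f S' =
    f S + \sum_v fit r S v / W S * moran_drift f S v.
Proof.
rewrite /moran_trans; under eq_bigr do rewrite mulr_suml.
rewrite exchange_big /=.
transitivity (\sum_v fit r S v / W S * (f S + moran_drift f S v)); last first.
  rewrite (eq_bigr (fun v => fit r S v / W S * f S + fit r S v / W S * moran_drift f S v));
    last by move=> v _; rewrite mulrDr.
  by rewrite big_split /= -mulr_suml sum_fit_div mul1r.
apply: eq_bigr => v _; under eq_bigr do rewrite -mulrA.
rewrite -mulr_sumr; congr (_ * _); rewrite /moran_drift.
have [out0 | out_ne] := eqVneq (outnb E v) finset.set0.
  rewrite out0 big_set0 mulr0 addr0.
  by under eq_bigr do rewrite mulrC; rewrite sum_mul_indicator big_pred1_eq.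
have deg_ne0 : #|outnb E v|%:R != 0 :> R by rewrite pnatr_eq0 -lt0n card_gt0.
rewrite sumrB sumr_const mulrBr -[f S *+ _]mulr_natr mulrCA mulVf // mulr1 addrC subrK.
under eq_bigr do rewrite mulr_suml.
rewrite exchange_big mulr_sumr /=; apply: eq_bigr => w _.
under eq_bigr do rewrite -mulrA.
rewrite -mulr_sumr; under eq_bigr do rewrite eq_sym mulrC.
by rewrite sum_mul_indicator big_pred1_eq.
Qed.

Lemma moran_trans_ge0 (S S' : {set T}) : 0 <= moran_trans E r S S'.
Proof.
apply: sumr_ge0 => v _; apply: mulr_ge0.
  by rewrite divr_ge0 ?ltW ?fit_gt0 ?total_fit_gt0.
case: ifP => _ //; apply: sumr_ge0 => w _; apply: mulr_ge0 => //.
by rewrite invr_ge0.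
Qed.

Lemma moran_trans_sum1 (S : {set T}) : \sum_S' moran_trans E r S S' = 1.
Proof.
have := moran_trans_expect (fun=> 1) S; under eq_bigr do rewrite mulr1; move=> ->.
rewrite big1 ?addr0 // => v _; rewrite /moran_drift big1 ?mulr0 // => w _.
exact: subrr.
Qed.

Lemma moran_update_id (S : {set T}) v w : (w \in S) = (v \in S) -> moran_update S v w = S.
Proof.
move=> wS; apply/setP => y; rewrite /moran_update.
by case: ifP => vS; rewrite !inE; case: eqP => // ->; rewrite wS vS.
Qed.

Lemma moran_drift_eq0 f (S : {set T}) v :
  (forall w, E v w -> (w \in S) = (v \in S)) -> moran_drift f S v = 0.
Proof.
move=> same; rewrite /moran_drift big1 ?mulr0 // => w; rewrite inE => /same.
by move/moran_update_id ->; rewrite subrr.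
Qed.

Lemma moran_drift_single f (S : {set T}) v w0 : E v w0 ->
  (forall w, E v w -> w != w0 -> (w \in S) = (v \in S)) ->
  moran_drift f S v = (f (moran_update S v w0) - f S) / #|outnb E v|%:R.
Proof.
move=> vw0 same; rewrite /moran_drift (bigD1 w0) ?inE //= big1 ?addr0 1?mulrC //.
by move=> w /andP[]; rewrite inE => vw /(same w vw)/moran_update_id ->; rewrite subrr.
Qed.

Lemma moran_drift_const f (S S' : {set T}) v w0 : E v w0 ->
  (forall w, E v w -> moran_update S v w = S') -> moran_drift f S v = f S' - f S.
Proof.
move=> vw0 all_S'; rewrite /moran_drift (eq_bigr (fun=> f S' - f S)) => [|w]; last first.
  by rewrite inE => /all_S' ->.
have deg_ne0 : #|outnb E v|%:R != 0 :> R.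
  by rewrite pnatr_eq0 -lt0n card_gt0; apply/set0Pn; exists w0; rewrite inE.
by rewrite sumr_const -[(_ - _) *+ _]mulr_natr mulrCA mulVf // mulr1.
Qed.

Lemma moran_drift_ge f (S : {set T}) v : (forall S', 0 <= f S') -> - f S <= moran_drift f S v.
Proof.
move=> f_ge0; rewrite /moran_drift.
have [out0 | out_ne] := eqVneq (outnb E v) finset.set0.
  by rewrite out0 big_set0 mulr0 oppr_le0.
have deg_gt0 : 0 < #|outnb E v|%:R :> R by rewrite ltr0n card_gt0.
apply: (@le_trans _ _ ((#|outnb E v|%:R)^-1 * \sum_(w in outnb E v) - f S)).
  by rewrite sumr_const -[(- _) *+ _]mulr_natr mulrCA mulVf ?mulr1 ?gt_eqF.
apply: ler_wpM2l; first by rewrite invr_ge0 ltW.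
by apply: ler_sum => w _; rewrite lerDr.
Qed.

Lemma moran_trans_expect_set0 (f : {set T} -> R) :
  \sum_S' moran_trans E r finset.set0 S' * f S' = f finset.set0.
Proof.
rewrite moran_trans_expect big1 ?addr0 // => v _.
by rewrite moran_drift_eq0 ?mulr0 // => w _; rewrite !inE.
Qed.

Lemma moran_init_sum1 (x0 : T) : \sum_S ((S == [set x0])%:R : R) = 1.
Proof. by rewrite (bigD1 [set x0]) //= eqxx big1 ?addr0 // => S /negbTE ->. Qed.

Lemma moran_dist_le1 x0 n S : moran_dist E r x0 n S <= 1.
Proof.
rewrite -(law_sum1 moran_trans_sum1 (moran_init_sum1 x0) n).
rewrite (bigD1 S) //= lerDl sumr_ge0 // => S' _.
exact: (law_ge0 moran_trans_ge0 (fun S => ler0n _ _)).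
Qed.

Lemma moran_extinction_ge x0 (f : {set T} -> R) (D : {set {set T}}) (de g : R) :
  (forall S, f S <= 1) -> (forall S, f S <= (S == finset.set0)%:R + (S \in D)%:R) ->
  (forall S, f S + de * (S \in D)%:R <= \sum_S' moran_trans E r S S' * f S') ->
  0 < de -> 0 < g -> g <= f [set x0] -> g / 2 <= extinction_prob E r x0.
Proof.
move=> f_le1 f_le_ind f_drift de_gt0 g_gt0 g_le.
have g_le_expect : g <= expect (fun S => (S == [set x0])%:R) f.
  by rewrite /expect; under eq_bigr do rewrite mulrC; rewrite sum_mul_indicator big_pred1_eq.
have [n hit] := chain_hits moran_trans_ge0 moran_trans_sum1 (fun S => ler0n _ _)
  (moran_init_sum1 x0) f_le1 f_le_ind f_drift de_gt0 g_gt0 g_le_expect.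
apply: le_trans hit _; apply: ub_le_sup; last by exists n.
by exists 1 => _ [n' _ <-]; exact: moran_dist_le1.
Qed.
End MoranKernel.

Section Weights.
Variable R : realFieldType.
Implicit Types r L M : R.

Definition weight_single r L : R := (13 * r ^+ 2 * L)^-1.

(* [weight_pair] must lie above [weight_single - u (1 - weight_single) / r] (positive
   drift at {x0}) and below [weight_single * (M - 1) / (M - 1 + r + u)] (positive drift
   at {x0, a}), where u = 1/(L M) is the probability that a reproducing centre picks x0. *)
Definition weight_pair r L M : R := weight_single r L * (1 - 2 * (r + 1) / (M - 1)).

Lemma weight_single_bounds r L : 1 < r -> 1 <= L -> 0 < weight_single r L <= 13^-1.
Proof.
move=> r_gt1 L_ge1; have r2_ge1 : 1 <= r ^+ 2 by rewrite expr2; nra.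
have P_ge13 : 13 <= 13 * r ^+ 2 * L by nra.
by rewrite invr_gt0 lef_pV2 ?posrE //; lra.
Qed.

Lemma weight_pair_bounds r L M : 1 < r -> 1 <= L -> 12 * r <= M ->
  0 <= weight_pair r L M <= weight_single r L.
Proof.
move=> r_gt1 L_ge1 M_ge; have /andP[gA_gt0 _] := weight_single_bounds r_gt1 L_ge1.
have eta_le1 : 2 * (r + 1) / (M - 1) <= 1 by rewrite ler_pdivrMr ?mul1r; lra.
have eta_ge0 : 0 <= 2 * (r + 1) / (M - 1) by rewrite divr_ge0; lra.
rewrite /weight_pair; apply/andP; split.
  by apply: mulr_ge0; [exact: ltW | rewrite subr_ge0].
by rewrite ger_pMr //; lra.
Qed.

Lemma weight_single_drift_gt0 r L M : 1 < r -> 1 <= L -> 12 * r <= M ->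
  0 < r * (weight_pair r L M - weight_single r L) + (1 - weight_single r L) / (L * M).
Proof.
move=> r_gt1 L_ge1 M_ge; rewrite /weight_pair /weight_single.
set Q := 13 * r ^+ 2 * (M - 1) - 2 * r * (r + 1) * M.
have Q_gt_M : M < Q.
  have c_ge0 : 0 <= 11 * r ^+ 2 - 2 * r - 1 by rewrite expr2; nra.
  have : 0 <= (11 * r ^+ 2 - 2 * r - 1) * (M - 12 * r) by rewrite mulr_ge0 // subr_ge0.
  rewrite /Q expr2; nra.
have num_gt0 : 0 < (13 * r ^+ 2 * L - 1) * (M - 1) - 2 * r * (r + 1) * L * M.
  have : 0 <= (L - 1) * Q by apply: mulr_ge0; lra.
  rewrite /Q in Q_gt_M *; lra.
have -> : r * ((13 * r ^+ 2 * L)^-1 * (1 - 2 * (r + 1) / (M - 1)) - (13 * r ^+ 2 * L)^-1) +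
    (1 - (13 * r ^+ 2 * L)^-1) / (L * M) =
  ((13 * r ^+ 2 * L - 1) * (M - 1) - 2 * r * (r + 1) * L * M) /
    (13 * r ^+ 2 * L * L * M * (M - 1)).
  by field; rewrite ?expf_neq0 ?mulf_neq0 ?gt_eqF //; lra.
by rewrite divr_gt0 // !mulr_gt0 ?exprn_gt0; lra.
Qed.

Lemma weight_pair_drift_gt0 r L M : 1 < r -> 1 <= L -> 12 * r <= M ->
  0 < (M - 1) * (weight_single r L - weight_pair r L M) - r * weight_pair r L M
      - weight_pair r L M / (L * M).
Proof.
move=> r_gt1 L_ge1 M_ge; have /andP[gA_gt0 _] := weight_single_bounds r_gt1 L_ge1.
rewrite /weight_pair; set gA := weight_single r L; set eta := 2 * (r + 1) / (M - 1).
have eta_le1 : eta <= 1 by rewrite ler_pdivrMr ?mul1r; lra.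
have eta_ge0 : 0 <= eta by rewrite divr_ge0; lra.
have u_le1 : (L * M)^-1 <= 1 by rewrite invr_le1 ?unitfE; nra.
have u_ge0 : 0 <= (L * M)^-1 by rewrite invr_ge0; nra.
have -> : (M - 1) * (gA - gA * (1 - eta)) - r * (gA * (1 - eta)) - gA * (1 - eta) / (L * M) =
    gA * (2 * (r + 1) - (r + (L * M)^-1) * (1 - eta)).
  by rewrite /eta; field; lra.
rewrite mulr_gt0 // subr_gt0; apply: (@le_lt_trans _ _ ((r + 1) * 1)); last lra.
by rewrite ler_pM; lra.
Qed.
End Weights.

Section Megastar.
Variables (k l m : nat) (i : 'I_l) (j : 'I_m).

Local Notation V := (megastar_V k l m).
Local Notation E := (@megastar_edge k l m).
Local Notation c := (@mega_centre k l m).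
Local Notation x0 := (@mega_res k l m i j).
Local Notation a := (@mega_feeder k l m i).
Local Notation siblings := [set @mega_res k l m i j' | j' in [set~ j]].
Local Notation A := [set x0].
Local Notation B := [set x0; a].

Lemma megastar_edge_res v i' j' : E v (mega_res i' j') -> v = c.
Proof. by case: v => [[[[]|[]]|[]]|]. Qed.

Lemma megastar_edge_feeder v : E v a -> v = x0 \/ v \in siblings.
Proof.
case: v => [[[[]|[i' j']]|[]]|] //= /eqP ->.
have [-> | ne] := eqVneq j' j; [left | right] => //.
by apply/imsetP; exists j'; rewrite ?inE.
Qed.

Lemma megastar_edge_from_res j' w : E (mega_res i j') w -> w = a.
Proof. by case: w => [[[[]|[]]|[]]|i'] //= /eqP ->. Qed.

Lemma megastar_edge_res_feeder j' : E (mega_res i j') a.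
Proof. exact: eqxx. Qed.

Lemma card_outnb_centre : #|outnb E c| = (l * m)%N.
Proof.
have -> : outnb E c = [set mega_res p.1 p.2 | p in [set: 'I_l * 'I_m]].
  apply/setP => v; rewrite inE; apply/idP/imsetP => [|[[i' j'] _ ->]] //.
  by case: v => [[[[]|[i' j']]|[]]|] // _; exists (i', j').
by rewrite card_imset ?cardsT ?card_prod ?card_ord // => [[? ?] [? ?] []] -> ->.
Qed.

Lemma notin_siblings v : (forall j', v != mega_res i j') -> v \notin siblings.
Proof. by move=> ne; apply/imsetP => -[j' _ v_def]; move: (ne j'); rewrite v_def eqxx. Qed.

Lemma card_siblings : #|siblings| = m.-1.
Proof. by rewrite card_imset ?cardsC1 ?card_ord // => ? ? []. Qed.

Lemma megastar_nonempty : (0 < #|V|)%N.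
Proof. by apply/card_gt0P; exists c. Qed.

Variables (R : realType) (r : R).
Hypothesis r_gt0 : 0 < r.

Local Notation N := ((l * m)%:R : R).

Lemma megastar_expect_single (f : {set V} -> R) :
  \sum_S moran_trans E r A S * f S =
    f A + (r * (f B - f A) + (f finset.set0 - f A) / N) / total_fit r A.
Proof.
rewrite moran_trans_expect ?megastar_nonempty //; congr (_ + _).
rewrite (bigD1 x0) //= (bigD1 c) //= big1 ?addr0; last first.
  move=> v /andP[ne_x0 ne_c]; rewrite moran_drift_eq0 ?mulr0 // => w vw.
  rewrite !inE (negbTE ne_x0).
  apply/eqP => w_x0; move: vw; rewrite w_x0 => /megastar_edge_res /eqP.
  by rewrite (negbTE ne_c).
rewrite (moran_drift_const f (S' := B) (w0 := a)) ?megastar_edge_res_feeder //; last first.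
  by move=> w /megastar_edge_from_res ->; rewrite /moran_update inE eqxx finset.setUC.
rewrite (moran_drift_single f (w0 := x0)) // => [|w _ ne_x0]; last first.
  by rewrite !inE (negbTE ne_x0).
rewrite /moran_update !inE /= finset.setDv card_outnb_centre /fit !inE eqxx /=.
by rewrite mul1r; ring.
Qed.

Lemma megastar_expect_pair (f : {set V} -> R) : (forall S, 0 <= f S) ->
  f B + ((m.-1)%:R * (f A - f B) - r * f B - f B / N) / total_fit r B <=
    \sum_S moran_trans E r B S * f S.
Proof.
move=> f_ge0; rewrite moran_trans_expect ?megastar_nonempty // lerD2l.
have W_gt0 := total_fit_gt0 r_gt0 megastar_nonempty B.
rewrite (bigID (mem siblings)) /=.
rewrite (eq_bigr (fun=> (f A - f B) / total_fit r B)) => [|v sib_v]; last first.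
  have v_notB : v \notin B.
    case/imsetP: sib_v => j' + ->; rewrite !inE negb_or andbT => ne_j.
    by apply/eqP; rewrite /mega_res => -[] /eqP; apply/negP.
  rewrite /fit (negbTE v_notB) mul1r mulrC; congr (_ * _).
  case/imsetP: sib_v v_notB => j' _ -> v_notB.
  rewrite (moran_drift_const f (S' := A) (megastar_edge_res_feeder j')) // => w.
  move=> /megastar_edge_from_res ->; rewrite /moran_update (negbTE v_notB).
  by apply/setP => y; rewrite !inE; case: (eqVneq y a) => [->|]; rewrite ?orbF.
rewrite sumr_const card_siblings -[(_ / _) *+ _]mulr_natr.
rewrite (bigD1 a) ?notin_siblings //= (bigD1 c) ?notin_siblings //= big1 ?addr0; last first.
  move=> v /andP[/andP[not_sib ne_a] ne_c]; rewrite moran_drift_eq0 ?mulr0 // => w vw.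
  have [v_x0 | ne_x0] := eqVneq v x0.
    by move: vw; rewrite v_x0 => /megastar_edge_from_res ->; rewrite !inE !eqxx orbT.
  rewrite !inE (negbTE ne_x0) (negbTE ne_a); apply/norP; split; apply/eqP => w_def.
    by move: vw; rewrite w_def => /megastar_edge_res /eqP; rewrite (negbTE ne_c).
  move: vw; rewrite w_def => /megastar_edge_feeder [/eqP | ].
    by rewrite (negbTE ne_x0).
  by rewrite (negbTE not_sib).
have drift_a := moran_drift_ge E B a f_ge0.
have drift_c : - f B / N <= moran_drift E f B c.
  rewrite (moran_drift_single f (w0 := x0)) // => [|w cw ne_x0]; last first.
    by rewrite !inE (negbTE ne_x0); apply/negbTE/eqP => w_a; move: cw; rewrite w_a.
  by rewrite card_outnb_centre ler_wpM2r ?invr_ge0 // lerBrDr addrC subrr.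
rewrite /fit !inE eqxx orbT /= div1r.
set W := total_fit r B; set M := m.-1%:R.
have -> : (M * (f A - f B) - r * f B - f B / N) / W =
    (f A - f B) / W * M + (r / W * - f B + W^-1 * (- f B / N)) by ring.
rewrite lerD2l lerD // ler_wpM2l // ?invr_ge0 ?divr_ge0 ?ltW //.
Qed.

Definition megastar_potential (gA gB : R) (S : {set V}) : R :=
  if S == finset.set0 then 1 else if S == A then gA else if S == B then gB else 0.

Lemma megastar_extinction_ge (gA gB : R) : 0 < gA <= 1 -> 0 <= gB <= 1 ->
  0 < r * (gB - gA) + (1 - gA) / N ->
  0 < (m.-1)%:R * (gA - gB) - r * gB - gB / N ->
  gA / 2 <= extinction_prob E r x0.
Proof.
move=> /andP[gA_gt0 gA_le1] /andP[gB_ge0 gB_le1] driftA_gt0 driftB_gt0.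
have A_ne0 : (A == finset.set0) = false.
  by apply/negbTE/set0Pn; exists x0; rewrite inE.
have B_ne0 : (B == finset.set0) = false.
  by apply/negbTE/set0Pn; exists x0; rewrite !inE eqxx.
have B_neA : (B == A) = false.
  by apply/negbTE/eqP => /setP /(_ a); rewrite !inE eqxx orbT.
set f := megastar_potential gA gB.
have [f0 fA fB] : [/\ f finset.set0 = 1, f A = gA & f B = gB].
  by rewrite /f /megastar_potential eqxx A_ne0 B_ne0 B_neA !eqxx.
have f_ge0 S : 0 <= f S.
  by rewrite /f /megastar_potential; do 3?case: ifP => _ //; exact: ltW.
have W_gt0 := total_fit_gt0 r_gt0 megastar_nonempty.
pose de := Order.min ((r * (gB - gA) + (1 - gA) / N) / total_fit r A)
  (((m.-1)%:R * (gA - gB) - r * gB - gB / N) / total_fit r B).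
apply: (moran_extinction_ge r_gt0 megastar_nonempty (f := f) (D := [set A; B]) (de := de)).
- by move=> S; rewrite /f /megastar_potential; do 3?case: ifP => _ //; exact: ltW.
- move=> S; rewrite !inE /f /megastar_potential.
  have [-> | _] := eqVneq S finset.set0; first by rewrite lerDl.
  by case: (S == A); case: (S == B); rewrite /= ?add0r ?mulr1n ?mulr0n.
- move=> S; rewrite !inE.
  have [-> | S_ne0] := eqVneq S finset.set0.
    rewrite moran_trans_expect_set0 ?megastar_nonempty // eq_sym A_ne0 eq_sym B_ne0.
    by rewrite mulr0 addr0.
  have [-> | S_neA] := eqVneq S A.
    by rewrite /= mulr1 megastar_expect_single f0 fA fB lerD2l ge_min lexx.
  have [-> | S_neB] := eqVneq S B.
    rewrite /= mulr1; apply: le_trans (megastar_expect_pair f_ge0).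
    by rewrite fA fB lerD2l ge_min lexx orbT.
  rewrite /= mulr0 addr0 {1}/f /megastar_potential (negbTE S_ne0) (negbTE S_neA) (negbTE S_neB).
  by apply: sumr_ge0 => S' _; rewrite mulr_ge0 // moran_trans_ge0 ?megastar_nonempty.
- by rewrite lt_min !divr_gt0.
- exact: gA_gt0.
- by rewrite fA.
Qed.
End Megastar.

Theorem lemma7p2 (R : realType) (r : R) (k l m : nat) (i : 'I_l) (j : 'I_m) :
  1 < r -> (0 < k)%N -> (0 < l)%N -> (0 < m)%N -> 12 * r <= m%:R ->
  1 / (26 * r ^+ 2 * l%:R) <=
    extinction_prob (@megastar_edge k l m) r (mega_res i j).
Proof.
move=> r_gt1 _ l_gt0 m_gt0 m_ge.
have r_gt0 : 0 < r by lra.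
have L_ge1 : 1 <= l%:R :> R by rewrite ler1n.
have /andP[gA_gt0 gA_le] := weight_single_bounds r_gt1 L_ge1.
have /andP[gB_ge0 gB_le] := weight_pair_bounds r_gt1 L_ge1 m_ge.
have -> : 1 / (26 * r ^+ 2 * l%:R) = weight_single r l%:R / 2.
  by rewrite /weight_single; field; rewrite ?expf_neq0 ?gt_eqF //; lra.
apply: (megastar_extinction_ge k i j r_gt0 (gB := weight_pair r l%:R m%:R)).
- by rewrite gA_gt0 (le_trans gA_le) // invf_le1; lra.
- by rewrite gB_ge0 (le_trans gB_le) // (le_trans gA_le) // invf_le1; lra.
- by rewrite natrM; exact: weight_single_drift_gt0.
- by rewrite natrM -subn1 natrB //; exact: weight_pair_drift_gt0.
Qed.
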